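(* Let $A$ be a finite set. The map $\mathrm{Ch}(Y^A)\ni\mathbf c\mapsto\overset{*}{<}_{\mathbf c}\in(R(A),\sqsupseteq)$ and the map $(R(A),\sqsupseteq)\ni\overset{*}{<}\mapsto\mathbf c^{\overset{*}{<}}\in\mathrm{Ch}(Y^A)$ are mutually inverse $\Sigma_A$-equivariant isomorphisms of posets, where $\mathrm{Ch}(Y^A)$ is ordered by $\mathbf c\le\mathbf e$ iff there is a morphism from $\mathbf c$ to $\mathbf e$ in the cube chain category.
   Context: $Y^A$ is the bi-pointed precubical set where $Y^A[k]$ is the set of pairs $(c,<)$ with $c:A\to\{0,*,1\}$, $|c^{-1}( * )|=k$, and $<$ a strict total order on $c^{-1}( * )$; if $c^{-1}( * )=\{a_1<\dots<a_k\}$ then the face $d^\varepsilon_i(c,<)=(c',<')$ where $c'(a_i)=\varepsilon$, $c'=c$ elsewhere, $<'$ the restriction of $<$; initial vertex $(\text{const}_0,\emptyset)$, final vertex $(\text{const}_1,\emptyset)$. For a cube $x$, $d^0(x)$, $d^1(x)$ are the vertices obtained by repeatedly applying $d^0_1$, resp. $d^1_1$. A cube chain is a sequence $\mathbf c=((c_1,<_1),\dots,(c_l,<_l))$ of cubes of positive dimension with $d^0$ of the first equal to the initial vertex, $d^1$ of the last equal to the final vertex, and $d^1$ of each equal to $d^0$ of the next; it corresponds to a bi-pointed precubical map from the serial wedge $\square^{n_1}\vee\dots\vee\square^{n_l}$ of standard cubes to $Y^A$. The cube chain category $\mathrm{Ch}(Y^A)$ has these maps as objects and as morphisms $\mathbf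 a\to\mathbf b$ the precubical maps $f$ between the wedges with $\mathbf b\circ f=\mathbf a$. For a cube chain $\mathbf c$ and $a\in A$ there is a unique $h_{\mathbf c}(a)$ with $c_{h_{\mathbf c}(a)}(a)=*$; define $\overset{*}{<}_{\mathbf c}=(\overset{x}{<}_{\mathbf c},\overset{y}{<}_{\mathbf c})$ by $a\overset{x}{<}_{\mathbf c}b$ iff $h_{\mathbf c}(a)<h_{\mathbf c}(b)$, and $a\overset{y}{<}_{\mathbf c}b$ iff $h_{\mathbf c}(a)=h_{\mathbf c}(b)=j$ and $a<_jb$. A strict partial order is semi-linear if induced by a (unique) surjection $h:A\to\{1,\dots,l\}$ ($a<b$ iff $h(a)<h(b)$). A double order on $A$ is a pair $(\overset{x}{<},\overset{y}{<})$ of strict partial orders such that any two distinct elements are comparable by one of them; it is regular if $\overset{x}{<}$ is semi-linear and $a\overset{x}{<}b$ implies $a,b$ are not $\overset{y}{<}$-comparable. $R(A)$ is the set of regular double orders, and $\overset{*}{<}_1\sqsubseteq\overset{*}{<}_2$ iff $\overset{x}{<}_1\subseteq\overset{x}{<}_2$ and $\overset{y}{<}_1\supseteq\overset{y}{<}_2$ ($\sqsupseteq$ is the opposite order). For $\overset{*}{<}\in R(A)$ with $h=h(\overset{x}{<}):A\to\{1,\dots,l\}$, let $c_j(a)=1$ if $h(a)<j$, $*$ if $h(a)=j$, $0$ if $h(a)>j$, let $<_j$ be the restriction of $\overset{y}{<}$ to $h^{-1}(j)$, and $\mathbf c^{\overset{*}{<}}=((c_1,<_1),\dots,(c_l,<_l))$.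 $\Sigma_A$ acts on $Y^A$ by $(c,<)\sigma=(c\circ\sigma,<\sigma)$ with $a(<\sigma)b$ iff $\sigma(a)<\sigma(b)$, on cube chains cubewise, and on double orders by $(\overset{x}{<},\overset{y}{<})\sigma=(\overset{x}{<}\sigma,\overset{y}{<}\sigma)$. *)

From mathcomp Require Import all_boot all_order all_fingroup.
Set Implicit Arguments. Unset Strict Implicit. Unset Printing Implicit Defensive.

(* Values in {0,star,1} are encoded as option bool:
   Some false = 0, None = *, Some true = 1. *)

Section CubeChains.
Variable A : finType.

(* A cube (c,<) of Y^A: c : A -> {0,star,1} and the strict total order < on
   the star set of c given as the list of the starred elements in increasing order. *)
Definition cube := ({ffun A -> option bool} * seq A)%type.

Definition is_cube (x : cube) : bool :=
  uniq x.2 && [forall a, (x.1 a == None) == (a \in x.2)].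

Definition cdim (x : cube) : nat := size x.2.

(* face d^e_i, with i 0-based (i < dim) *)
Definition yface (e : bool) (i : nat) (x : cube) : cube :=
  ([ffun b => if (b \in x.2) && (index b x.2 == i) then Some e else x.1 b],
   [seq b <- x.2 | index b x.2 != i]).

Definition init_v : cube := ([ffun => Some false], [::]).
Definition final_v : cube := ([ffun => Some true], [::]).

Definition vd (e : bool) (x : cube) : cube :=
  ([ffun a => if x.1 a is None then Some e else x.1 a], [::]).

(* cube chains (the empty chain is a cube chain iff init_v = final_v, i.e. A empty) *)
Definition is_chain (cc : seq cube) : Prop :=
  (forall i, i < size cc -> is_cube (nth init_v cc i) /\ 0 < cdim (nth init_v cc i))
  /\ (forall i, i < size cc ->
        vd false (nth init_v cc i) =
        (if i is i'.+1 then vd true (nth init_v cc i') else init_v))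
  /\ (if cc is [::] then init_v else vd true (last init_v cc)) = final_v.

(* A cell of the wedge  □^{n_0} ∨ ... ∨ □^{n_{l-1}}  (ns = [n_0;...;n_{l-1}])
   is a pair (j, x) with j < l and x : {0,star,1}^{n_j}, where the final vertex of
   □^{n_j} is identified with the initial vertex of □^{n_(j+1)}; the canonical
   representative is the one in □^{n_(j+1)}. *)
Definition wcell := (nat * seq (option bool))%type.

Definition is_wcell (ns : seq nat) (z : wcell) : bool :=
  (z.1 < size ns) && (size z.2 == nth 0 ns z.1)
  && ~~ ((z.1.+1 < size ns) && all (fun b => b == Some true) z.2).

Definition wnorm (ns : seq nat) (z : wcell) : wcell :=
  if (z.1.+1 < size ns) && all (fun b => b == Some true) z.2
  then (z.1.+1, nseq (nth 0 ns z.1.+1) (Some false)) else z.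

Definition wdim (z : wcell) : nat := count (fun b => b == None) z.2.

(* replace the i-th (0-based) star by e : the standard cube face d^e_{i+1} *)
Fixpoint set_star (e : bool) (i : nat) (x : seq (option bool)) :=
  match x with
  | [::] => [::]
  | None :: x' => if i is i'.+1 then None :: set_star e i' x' else Some e :: x'
  | b :: x' => b :: set_star e i x'
  end.

Definition wface (ns : seq nat) (e : bool) (i : nat) (z : wcell) : wcell :=
  wnorm ns (z.1, set_star e i z.2).

Definition precubical_map (ns ms : seq nat) (F : wcell -> wcell) : Prop :=
  forall z, is_wcell ns z ->
    [/\ is_wcell ms (F z), wdim (F z) = wdim z &
        forall e i, i < wdim z -> F (wface ns e i z) = wface ms e i (F z)].

Definition dims (cc : seq cube) : seq nat := map cdim cc.

Definition chain_map (cc : seq cube) (z : wcell) : cube :=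
  let x := nth init_v cc z.1 in
  ([ffun a => if a \in x.2 then nth None z.2 (index a x.2) else x.1 a],
   [seq a <- x.2 | nth None z.2 (index a x.2) == None]).

(* order on Ch(Y^A): there is a morphism cc -> ee in the cube chain category *)
Definition chain_le (cc ee : seq cube) : Prop :=
  exists F, precubical_map (dims cc) (dims ee) F
            /\ forall z, is_wcell (dims cc) z -> chain_map ee (F z) = chain_map cc z.

Definition dorder := (rel A * rel A)%type.

Definition strict_po (r : rel A) : Prop :=
  (forall a, ~~ r a a) /\ (forall a b c, r a b -> r b c -> r a c).

Definition semilinear (r : rel A) : Prop :=
  exists (h : A -> nat) (l : nat),
    (forall a, 0 < h a <= l) /\ (forall k, 0 < k <= l -> exists a, h a = k)
    /\ (forall a b, r a b = (h a < h b)).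

Definition is_double_order (d : dorder) : Prop :=
  strict_po d.1 /\ strict_po d.2 /\
  (forall a b, a != b -> [|| d.1 a b, d.1 b a, d.2 a b | d.2 b a]).

Definition regular (d : dorder) : Prop :=
  is_double_order d /\ semilinear d.1 /\
  (forall a b, d.1 a b -> ~~ d.2 a b /\ ~~ d.2 b a).

Definition dle (d1 d2 : dorder) : Prop :=
  (forall a b, d1.1 a b -> d2.1 a b) /\ (forall a b, d2.2 a b -> d1.2 a b).

Definition deq (d1 d2 : dorder) : Prop := d1.1 =2 d2.1 /\ d1.2 =2 d2.2.

(* h_c (0-based) and the double order of a cube chain *)
Definition hc (cc : seq cube) (a : A) : nat := find (fun x : cube => x.1 a == None) cc.

Definition dorder_of (cc : seq cube) : dorder :=
  (fun a b => hc cc a < hc cc b,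
   fun a b => (hc cc a == hc cc b) &&
              (index a (nth init_v cc (hc cc a)).2 < index b (nth init_v cc (hc cc a)).2)).

(* the surjection h(<^x) : A -> {1..l}: h a = 1 + number of levels below a,
   levels being identified with their strict down-sets *)
Definition downset (r : rel A) (b : A) : {set A} := [set c | r c b].
Definition hx (r : rel A) (a : A) : nat :=
  #|[set downset r b | b in [set b | r b a]]|.+1.
Definition nlevels (r : rel A) : nat := #|[set downset r b | b : A]|.

Definition cstar (d : dorder) : seq cube :=
  mkseq (fun j =>
    ([ffun a => if hx d.1 a < j.+1 then Some true
                else if hx d.1 a == j.+1 then None else Some false],
     sort (fun a b => (a == b) || d.2 a b)
          [seq a <- enum A | hx d.1 a == j.+1]))
    (nlevels d.1).

Definition act_cube (x : cube) (s : {perm A}) : cube :=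
  ([ffun a => x.1 (s a)], map (s^-1)%g x.2).
Definition act_chain (cc : seq cube) (s : {perm A}) : seq cube :=
  map (fun x => act_cube x s) cc.
Definition act_dorder (d : dorder) (s : {perm A}) : dorder :=
  (fun a b => d.1 (s a) (s b), fun a b => d.2 (s a) (s b)).

End CubeChains.

From mathcomp Require Import all_boot all_order all_fingroup.
From mathcomp Require Import zify.
Set Implicit Arguments. Unset Strict Implicit. Unset Printing Implicit Defensive.

(* A cube chain is determined by the index h(a) of the cube in which each
   coordinate a is starred (the coordinate is 0 before it and 1 after it)
   together with the order of the stars inside each cube: this is exactly a
   regular double order, and cstar rebuilds the chain because the number of
   levels below a, as counted by hx, recovers the height function of a
   semilinear order.  A wedge morphism c -> e sends the top cell of each cube
   of c into a single cube of e; comparing coordinates shows that this level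
   map is monotone and preserves the star orders, i.e. the double orders are
   related by the reversed order.  Conversely, when they are, every cell of c
   is sent to the unique cell of the matching cube of e with the same image in
   Y^A; this map is precubical since chain maps are injective on cells and
   commute with faces. *)

Section SeqIndex.
Variable T : eqType.
Implicit Types (s : seq T) (P : pred T).

Lemma sorted_index s : uniq s -> sorted (fun u v => index u s < index v s) s.
Proof.
elim: s => [|a s IH] //= /andP[a_notin uniq_s].
have neq_a b : b \in s -> (a == b) = false by move=> b_in; apply: contraNF a_notin => /eqP ->.
rewrite (path_sortedE (fun _ _ _ => @ltn_trans _ _ _)); apply/andP; split.
  by apply/allP => b b_in /=; rewrite eqxx neq_a.
apply: (sub_in_sorted (P := mem s)) (IH uniq_s); last exact/allP.
by move=> u v u_in v_in /=; rewrite !neq_a.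
Qed.

Lemma index_filter_lt s P a b : uniq s -> a \in filter P s -> b \in filter P s ->
  index a (filter P s) < index b (filter P s) -> index a s < index b s.
Proof.
move=> us ma mb iab.
have lt_trans : transitive (fun u v => index u s < index v s) by move=> ? ? ?; apply: ltn_trans.
exact: (sorted_ltn_index lt_trans (sorted_filter lt_trans P (sorted_index us))).
Qed.

Lemma index_filter s P a : a \in s -> P a ->
  index a (filter P s) = count P (take (index a s) s).
Proof.
elim: s => [|b s IH] //= as_ Pa.
case: (eqVneq b a) => [->|ba]; first by rewrite Pa /= !eqxx.
rewrite in_cons eq_sym (negbTE ba) /= in as_.
by case Pb: (P b); rewrite /= ?(negbTE ba) ?IH ?Pb.
Qed.

Lemma map_nth_index (U : Type) (x0 : U) s (x : seq U) : uniq s -> size s = size x ->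
  [seq nth x0 x (index a s) | a <- s] = x.
Proof.
move=> us sx; apply: (@eq_from_nth _ x0); rewrite size_map // => p ps.
have a0 : T by move: ps; case: (s) => [|a0 ? ?].
by rewrite (nth_map a0) // index_uniq // -sx.
Qed.

Lemma count_take_nth_index (U : Type) (x0 : U) (q : pred U) s (x : seq U) p :
  uniq s -> size s = size x ->
  count (fun a => q (nth x0 x (index a s))) (take p s) = count q (take p x).
Proof. by move=> us sx; rewrite -{2}(map_nth_index x0 us sx) -map_take count_map. Qed.

End SeqIndex.

Local Notation stars cc k := (nth (init_v _) cc k).2.

Section CubeChainLevels.
Variable A : finType.
Implicit Types (cc : seq (cube A)) (x : cube A).

Lemma mem_cube_stars x a : is_cube x -> (a \in x.2) = (x.1 a == None).
Proof. by case/andP => _ /forallP /(_ a) /eqP. Qed.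

Definition chain_vertex cc k : cube A :=
  if k is k'.+1 then vd true (nth (init_v A) cc k') else init_v A.

Lemma chain_vertexE cc a k : is_chain cc -> k <= size cc ->
  (chain_vertex cc k).1 a = Some (has (fun x : cube A => x.1 a == None) (take k cc)).
Proof.
move=> [_ [chain_d0 _]]; elim: k => [|k IH] lt_k; first by rewrite take0 /= ffunE.
rewrite (take_nth (init_v A) lt_k) has_rcons /= ffunE.
have := congr1 (fun x : cube A => x.1 a) (chain_d0 k lt_k); rewrite /vd /= ffunE.
by case: ((nth (init_v A) cc k).1 a) => //= b ->; rewrite IH // ltnW.
Qed.

Lemma chain_has_star cc a : is_chain cc -> has (fun x : cube A => x.1 a == None) cc.
Proof.
move=> chain_cc; have := chain_vertexE a chain_cc (leqnn (size cc)).
rewrite take_size; case: chain_cc => [_ [_]].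
case: cc => [|x s] /(congr1 (fun x : cube A => x.1 a)); first by rewrite /= !ffunE.
by rewrite -(nth_last (init_v A)) /= !ffunE => -> [<-].
Qed.

Lemma chain_hc_lt cc a : is_chain cc -> hc cc a < size cc.
Proof. by move/(chain_has_star a); rewrite has_find. Qed.

Lemma chain_coord cc a k : is_chain cc -> k < size cc ->
  (nth (init_v A) cc k).1 a =
  if k < hc cc a then Some false else if k == hc cc a then None else Some true.
Proof.
move=> chain_cc lt_k; have has_a := chain_has_star a chain_cc.
have := chain_vertexE a chain_cc (ltnW lt_k).
case: (chain_cc) => [_ [/(_ k lt_k) chain_d0 _]].
rewrite /chain_vertex -chain_d0 /vd /= ffunE has_take // -/(hc cc a).
case E: ((nth (init_v A) cc k).1 a) => [b|] [hk].
  rewrite hk; case: (ltngtP k (hc cc a)) => // eq_k.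
  by move/(nth_find (init_v A)): has_a; rewrite -/(hc cc a) -eq_k E.
case: (ltngtP k (hc cc a)) hk => // lt_hk.
by have := before_find (init_v A) lt_hk; rewrite E eqxx.
Qed.

Lemma chain_starE cc a k : is_chain cc -> k < size cc ->
  ((nth (init_v A) cc k).1 a == None) = (k == hc cc a).
Proof. by move=> chain_cc lt_k; rewrite chain_coord //; case: ltngtP. Qed.

Lemma chain_cube cc k : is_chain cc -> k < size cc -> is_cube (nth (init_v A) cc k).
Proof. by move=> chain_cc /(chain_cc.1 k) []. Qed.

Lemma chain_cube_uniq cc k : is_chain cc -> k < size cc -> uniq (stars cc k).
Proof. by move=> chain_cc /(chain_cube chain_cc) /andP[]. Qed.

Lemma mem_chain_stars cc a k : is_chain cc -> k < size cc ->
  (a \in stars cc k) = (k == hc cc a).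
Proof. by move=> chain_cc lt_k; rewrite mem_cube_stars ?chain_starE ?chain_cube. Qed.

Lemma chain_level_nonempty cc k : is_chain cc -> k < size cc -> exists a, hc cc a = k.
Proof.
move=> chain_cc lt_k; have [_] := chain_cc.1 k lt_k.
rewrite /cdim; case E: (stars cc k) => [|a s] // _; exists a.
have : a \in stars cc k by rewrite E mem_head.
by rewrite mem_chain_stars // => /eqP.
Qed.

End CubeChainLevels.

Section Semilinear.
Variables (A : finType) (r : rel A) (h : A -> nat) (l : nat).
Hypotheses (h_range : forall a, 0 < h a <= l)
  (h_onto : forall k, 0 < k <= l -> exists a, h a = k)
  (rE : forall a b, r a b = (h a < h b)).

Lemma card_levels_below m : m <= l ->
  #|[set downset r b | b in [set b | h b <= m]]| = m.
Proof.
move=> le_ml; pose below (k : 'I_m) := [set c | h c <= k].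
have -> : [set downset r b | b in [set b | h b <= m]] = below @: setT.
  apply/setP => X; apply/imsetP/imsetP.
  - case=> b; rewrite inE => hb ->.
    have lt_hb : (h b).-1 < m by have := h_range b; lia.
    exists (Ordinal lt_hb); first by rewrite inE.
    by apply/setP => c; rewrite !inE rE /=; have := h_range b; lia.
  - case=> k _ ->; have [b hb] : exists b, h b = k.+1 by apply: h_onto; have := ltn_ord k; lia.
    exists b; first by rewrite inE hb.
    by apply/setP => c; rewrite !inE rE hb /=; lia.
rewrite card_imset ?cardsT ?card_ord // => k k' /setP eq_kk'; apply/val_inj => /=.
without loss lt_kk' : k k' eq_kk' / k < k'.
  move=> wlog; case: (ltngtP k k') => [lt_kk'|lt_k'k|//]; first exact: wlog.
  by symmetry; apply: (wlog _ _ _ lt_k'k) => c; rewrite eq_kk'.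
have [c hc] : exists c, h c = k' by apply: h_onto; have := ltn_ord k'; lia.
by have := eq_kk' c; rewrite !inE hc leqnn leqNgt lt_kk'.
Qed.

Lemma hx_semilinear a : hx r a = h a.
Proof.
rewrite /hx; have -> : [set b | r b a] = [set b | h b <= (h a).-1].
  by apply/setP => b; rewrite !inE rE; have := h_range a; lia.
by rewrite card_levels_below; have := h_range a; lia.
Qed.

Lemma nlevels_semilinear : nlevels r = l.
Proof.
rewrite /nlevels -(card_levels_below (leqnn l)); apply: eq_card => X.
apply/imsetP/imsetP => -[b b_in ->]; exists b => //.
by rewrite inE; case/andP: (h_range b).
Qed.

End Semilinear.

Section DoubleOrderOfChain.
Variable A : finType.
Implicit Types (cc : seq (cube A)) (d : dorder A).

Lemma chain_height_range cc : is_chain cc -> forall a, 0 < (hc cc a).+1 <= size cc.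
Proof. by move=> chain_cc a; apply: chain_hc_lt. Qed.

Lemma chain_height_onto cc : is_chain cc ->
  forall k, 0 < k <= size cc -> exists a, (hc cc a).+1 = k.
Proof.
move=> chain_cc k k_range; have [a ha] := chain_level_nonempty chain_cc (k := k.-1) ltac:(lia).
by exists a; rewrite ha; lia.
Qed.

Lemma regular_dorder_of cc : is_chain cc -> regular (dorder_of cc).
Proof.
move=> chain_cc; split; last split.
- split; last split.
  + by split=> [a|a b c]; [rewrite /= ltnn | apply: ltn_trans].
  + split=> [a|a b c /= /andP[/eqP hab iab] /andP[/eqP hbc ibc]]; first by rewrite /= ltnn andbF.
    by rewrite hab hbc eqxx; rewrite hab hbc in iab; rewrite hbc in ibc; apply: ltn_trans ibc.
  + move=> a b neq_ab /=; case: (ltngtP (hc cc a) (hc cc b)) => //= hab.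
    rewrite hab; set s := stars cc (hc cc b).
    have ma : a \in s by rewrite mem_chain_stars ?hab ?chain_hc_lt.
    have mb : b \in s by rewrite mem_chain_stars ?chain_hc_lt.
    case: ltngtP => //= iab; move: neq_ab.
    by rewrite -(nth_index a ma) iab nth_index ?eqxx.
- exists (fun a => (hc cc a).+1), (size cc).
  by split; [exact: chain_height_range | split; first exact: chain_height_onto].
- by move=> a b /= hab; split; apply/negP => /andP[/eqP eab _]; move: hab; rewrite eab ltnn.
Qed.

Definition yle d : rel A := fun a b => (a == b) || d.2 a b.

Lemma yle_trans d : regular d -> transitive (yle d).
Proof.
case=> [[_ [[_ tr] _]] _] b a c /orP[/eqP->|ab] // /orP[/eqP<-|bc]; first by rewrite /yle ab orbT.
by rewrite /yle (tr _ _ _ ab bc) orbT.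
Qed.

Lemma yle_anti d : regular d -> antisymmetric (yle d).
Proof.
case=> [[_ [[irr tr] _]] _] a b /andP[/orP[/eqP->//|ab] /orP[/eqP->//|ba]].
by have := irr a; rewrite (tr _ _ _ ab ba).
Qed.

Lemma yle_total_level d h k : regular d -> (forall a b, d.1 a b = (h a < h b)) ->
  {in [pred a | h a == k] &, total (yle d)}.
Proof.
case=> [[_ [_ tot]] _] dE a b /eqP ha /eqP hb; rewrite /yle.
case: (eqVneq a b) => [->|neq_ab] //=.
by have := tot a b neq_ab; rewrite !dE ha hb ltnn /= => /orP[] ->; rewrite ?orbT.
Qed.

Lemma sorted_level d h k : regular d -> (forall a b, d.1 a b = (h a < h b)) ->
  sorted (yle d) (sort (yle d) [seq a <- enum A | h a == k]).
Proof.
move=> reg dE; apply: (sort_sorted_in (P := [pred a | h a == k])); last exact: filter_all.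
exact: yle_total_level.
Qed.

Lemma index_sorted_yle d s a b : regular d -> sorted (yle d) s -> a \in s -> b \in s ->
  (index a s < index b s) = d.2 a b.
Proof.
move=> reg sorted_s a_in b_in; have [[_ [[irr tr] _]] _] := reg.
have yle_index := sorted_ltn_index (yle_trans reg) sorted_s.
case: (ltngtP (index a s) (index b s)) => [lt_ab|lt_ba|eq_ab].
- by case/orP: (yle_index a b a_in b_in lt_ab) => // /eqP eq_ab; move: lt_ab; rewrite eq_ab ltnn.
- case/orP: (yle_index b a b_in a_in lt_ba) => [/eqP eq_ba|ba].
    by move: lt_ba; rewrite eq_ba ltnn.
  by apply/esym/negP => ab; have := irr a; rewrite (tr _ _ _ ab ba).
- have -> : a = b by rewrite -(nth_index a a_in) eq_ab nth_index.
  by rewrite (negbTE (irr b)).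
Qed.

Definition level_cube (h : A -> nat) (R : rel A) (j : nat) : cube A :=
  ([ffun a => if h a < j.+1 then Some true else if h a == j.+1 then None else Some false],
   sort R [seq a <- enum A | h a == j.+1]).

Lemma cstar_semilinear d h l :
  (forall a, 0 < h a <= l) -> (forall k, 0 < k <= l -> exists a, h a = k) ->
  (forall a b, d.1 a b = (h a < h b)) ->
  cstar d = mkseq (level_cube h (yle d)) l.
Proof.
move=> h_range h_onto dE; rewrite /cstar (nlevels_semilinear h_range h_onto dE).
apply: eq_mkseq => j; rewrite /level_cube; congr pair.
  by apply/ffunP => a; rewrite !ffunE (hx_semilinear h_range h_onto dE).
by congr sort; apply: eq_filter => a; rewrite (hx_semilinear h_range h_onto dE).
Qed.

Lemma level_cubes_chain h R l :
  (forall a, 0 < h a <= l) -> (forall k, 0 < k <= l -> exists a, h a = k) ->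
  is_chain (mkseq (level_cube h R) l).
Proof.
move=> h_range h_onto; rewrite /is_chain size_mkseq; split; last split.
- move=> i lt_il; rewrite nth_mkseq //; split.
    rewrite /is_cube sort_uniq filter_uniq ?enum_uniq //=.
    apply/forallP => a; rewrite ffunE mem_sort mem_filter mem_enum andbT /=.
    by case: (ltngtP (h a) i.+1).
  rewrite /cdim /= size_sort size_filter -has_count.
  by have [a ha] := h_onto i.+1 ltac:(lia); apply/hasP; exists a; rewrite ?mem_enum ?ha.
- case=> [|i] lt_il; rewrite !nth_mkseq ?(ltnW lt_il) //;
    congr pair; apply/ffunP => a; rewrite !ffunE.
    by have := h_range a; case: (ltngtP (h a) 1).
  by case: (ltngtP (h a) i.+1) => e; case: (ltngtP (h a) i.+2) => e' //; lia.
- case: l h_range h_onto => [|l] h_range h_onto.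
    by congr pair; apply/ffunP => a; have := h_range a; lia.
  rewrite -nth_last size_mkseq nth_mkseq //; congr pair; apply/ffunP => a; rewrite !ffunE.
  by have := h_range a; case: (ltngtP (h a) l.+1) => //; lia.
Qed.

Lemma regular_cstar_chain d : regular d -> is_chain (cstar d).
Proof.
case=> [_ [[h [l [h_range [h_onto dE]]]] _]].
by rewrite (cstar_semilinear h_range h_onto dE); apply: level_cubes_chain.
Qed.

End DoubleOrderOfChain.

Section Inverses.
Variable A : finType.
Implicit Types (cc : seq (cube A)) (d : dorder A).

Lemma dorder_ofK cc : is_chain cc -> cstar (dorder_of cc) = cc.
Proof.
move=> chain_cc; have reg := regular_dorder_of chain_cc.
rewrite (cstar_semilinear (chain_height_range chain_cc) (chain_height_onto chain_cc)) //.
apply: (@eq_from_nth _ (init_v A)); rewrite size_mkseq // => j lt_j.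
rewrite nth_mkseq // [RHS]surjective_pairing /level_cube; congr pair.
  apply/ffunP => a; rewrite ffunE chain_coord // !ltnS eqSS.
  by case: (ltngtP (hc cc a) j).
apply: (sorted_eq (yle_trans reg) (yle_anti reg) (sorted_level _ reg _)) => //.
- apply: (sub_in_sorted (P := mem (stars cc j)))
    (sorted_index (chain_cube_uniq chain_cc lt_j)); last exact/allP.
  move=> u v; rewrite !mem_chain_stars // => /eqP hu /eqP hv iuv.
  by rewrite /yle /= -hu -hv eqxx iuv orbT.
- apply: uniq_perm; last move=> a.
  + by rewrite sort_uniq filter_uniq ?enum_uniq.
  + exact: chain_cube_uniq.
  by rewrite mem_sort mem_filter mem_enum andbT mem_chain_stars // eqSS eq_sym.
Qed.

Lemma hc_level_cubes (h : A -> nat) (R : rel A) l : (forall a, 0 < h a <= l) ->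
  (forall k, 0 < k <= l -> exists a, h a = k) ->
  forall a, hc (mkseq (level_cube h R) l) a = (h a).-1.
Proof.
move=> h_range h_onto a; have lt_ha : (h a).-1 < l by have := h_range a; lia.
have chain_cc := level_cubes_chain R h_range h_onto.
apply/esym/eqP; rewrite -chain_starE ?size_mkseq // nth_mkseq //.
by rewrite /level_cube ffunE /=; have := h_range a; case: (h a) => // n _; rewrite ltnn eqxx.
Qed.

Lemma cstarK d : regular d -> deq (dorder_of (cstar d)) d.
Proof.
move=> reg; case: (reg) => [_ [[h [l [h_range [h_onto dE]]]] x_not_y]].
rewrite (cstar_semilinear h_range h_onto dE).
have hcE := hc_level_cubes (yle d) h_range h_onto.
split=> a b /=; rewrite !hcE; first by rewrite dE; have := h_range a; have := h_range b; lia.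
have ha : (h a).-1.+1 = h a by have := h_range a; lia.
rewrite nth_mkseq /level_cube /= ?ha; last by have := h_range a; lia.
have [hab|hab] := eqVneq (h a) (h b); last first.
  have -> /= : ((h a).-1 == (h b).-1) = false.
    by apply/negbTE; move: hab; have := h_range a; have := h_range b; lia.
  case: (ltngtP (h a) (h b)) hab => // lt_ab _.
  + by have [/negbTE -> _] := x_not_y a b ltac:(by rewrite dE).
  + by have [_ /negbTE ->] := x_not_y b a ltac:(by rewrite dE).
rewrite hab eqxx /= -hab; apply: index_sorted_yle reg (sorted_level _ reg dE) _ _.
  by rewrite mem_sort mem_filter mem_enum eqxx.
by rewrite mem_sort mem_filter mem_enum hab eqxx.
Qed.

End Inverses.

Section Equivariance.
Variables (A : finType) (s : {perm A}).
Implicit Types (cc : seq (cube A)) (d : dorder A).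

Lemma index_map_permV (t : seq A) a : index a (map (s^-1)%g t) = index (s a) t.
Proof. by rewrite -{1}(permK s a) index_map //; apply: perm_inj. Qed.

Lemma mem_map_permV (t : seq A) a : (a \in map (s^-1)%g t) = (s a \in t).
Proof. by rewrite -{1}(permK s a) mem_map //; apply: perm_inj. Qed.

Lemma nth_act_chain cc k :
  nth (init_v A) (act_chain cc s) k = act_cube (nth (init_v A) cc k) s.
Proof.
have act_init : act_cube (init_v A) s = init_v A.
  by congr pair; apply/ffunP => a; rewrite !ffunE.
by rewrite -{1}act_init; elim: cc k => [|x cc IH] [|k] /=.
Qed.

Lemma dorder_of_act cc : deq (dorder_of (act_chain cc s)) (act_dorder (dorder_of cc) s).
Proof.
have hcE a : hc (act_chain cc s) a = hc cc (s a).
  by rewrite /hc find_map; apply: eq_find => x; rewrite /preim /= ffunE.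
by split=> a b /=; rewrite !hcE // nth_act_chain /= !index_map_permV.
Qed.

Lemma cstar_act d : regular d -> cstar (act_dorder d s) = act_chain (cstar d) s.
Proof.
move=> reg; case: (reg) => [_ [[h [l [h_range [h_onto dE]]]] _]].
have hs_range a : 0 < h (s a) <= l by [].
have hs_onto k : 0 < k <= l -> exists a, h (s a) = k.
  by move/h_onto => [a ha]; exists ((s^-1)%g a); rewrite permKV.
rewrite (cstar_semilinear h_range h_onto dE).
rewrite (@cstar_semilinear _ _ (fun a => h (s a)) l) //; last by move=> a b /=; rewrite dE.
rewrite /act_chain /mkseq -map_comp; apply: eq_map => j /=.
rewrite /level_cube /act_cube /=; congr pair; first by apply/ffunP => a; rewrite !ffunE.
have ylesE a b : yle (act_dorder d s) a b = yle d (s a) (s b).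
  by rewrite /yle /= (inj_eq perm_inj).
apply: (@sorted_eq _ (yle (act_dorder d s))).
- by move=> b a c; rewrite !ylesE; apply: yle_trans.
- by move=> a b; rewrite !ylesE => /(yle_anti reg); apply: perm_inj.
- apply: (sort_sorted_in (P := [pred a | h (s a) == j.+1])); last exact: filter_all.
  by move=> a b ha hb; rewrite !ylesE; exact: (yle_total_level reg dE ha hb).
- rewrite sorted_map; apply: sub_sorted (sorted_level _ reg dE) => u v /=.
  by rewrite ylesE !permKV.
- have uniq_sort (R : rel A) (P : pred A) : uniq (sort R [seq a <- enum A | P a]).
    by rewrite sort_uniq filter_uniq ?enum_uniq.
  apply: uniq_perm; [exact: uniq_sort | by rewrite (map_inj_uniq perm_inj) uniq_sort | move=> a].
  by rewrite mem_map_permV !mem_sort mem_filter mem_enum mem_filter mem_enum.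
Qed.

End Equivariance.

Lemma size_set_star e i (x : seq (option bool)) : size (set_star e i x) = size x.
Proof. by elim: x i => [|[b|] x IH] [|i] //=; rewrite IH. Qed.

Lemma nth_set_star e i (x : seq (option bool)) p : p < size x ->
  nth None (set_star e i x) p =
  if (nth None x p == None) && (count (pred1 None) (take p x) == i) then Some e
  else nth None x p.
Proof.
elim: x i p => [|[b|] x IH] i [|p] //= lt_p; first by rewrite IH.
  by case: i.
by case: i => [|i] /=; rewrite ?andbF // IH // eqSS.
Qed.

Section ChainMap.
Variables (A : finType) (cc : seq (cube A)).
Hypothesis chain_cc : is_chain cc.

Lemma size_dims : size (dims cc) = size cc.
Proof. exact: size_map. Qed.

Lemma nth_dims k : k < size cc -> nth 0 (dims cc) k = cdim (nth (init_v A) cc k).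
Proof. by move=> lt_k; rewrite (nth_map (init_v A)). Qed.

Lemma is_wcell_chainP k x : is_wcell (dims cc) (k, x) ->
  k < size cc /\ size x = size (stars cc k).
Proof. by case/andP=> /andP[]; rewrite /= size_dims => lt_k /eqP; rewrite nth_dims. Qed.

Lemma chain_mapE k x a : k < size cc ->
  (chain_map cc (k, x)).1 a =
  if hc cc a < k then Some true
  else if hc cc a == k then nth None x (index a (stars cc k)) else Some false.
Proof.
move=> lt_k; rewrite /chain_map ffunE /= mem_chain_stars // eq_sym chain_coord //.
by case: (ltngtP (hc cc a) k).
Qed.

Lemma level_le_of_chain_map_neq0 k w a : k < size cc ->
  (chain_map cc (k, w)).1 a != Some false -> hc cc a <= k.
Proof. by move=> lt_k; rewrite chain_mapE //; case: ltngtP. Qed.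

Lemma level_of_chain_map_star k w a : k < size cc ->
  (chain_map cc (k, w)).1 a = None -> hc cc a = k.
Proof. by move=> lt_k; rewrite chain_mapE //; case: ltngtP. Qed.

Lemma chain_map_stars k x : k < size cc ->
  (chain_map cc (k, x)).2 = [seq a <- stars cc k | (chain_map cc (k, x)).1 a == None].
Proof. by move=> lt_k; apply: eq_in_filter => a a_in; rewrite /chain_map ffunE /= a_in. Qed.

Lemma wcell_coordsE k x : k < size cc -> size x = size (stars cc k) ->
  x = [seq (chain_map cc (k, x)).1 a | a <- stars cc k].
Proof.
move=> lt_k size_x; rewrite -{1}(map_nth_index None (chain_cube_uniq chain_cc lt_k) (esym size_x)).
by apply/eq_in_map => a a_in; rewrite /chain_map ffunE /= a_in.
Qed.

Lemma is_wcell_wnorm k x : k < size cc -> size x = nth 0 (dims cc) k ->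
  is_wcell (dims cc) (wnorm (dims cc) (k, x)).
Proof.
move=> lt_k size_x; rewrite /wnorm /is_wcell /= size_dims.
case: ifP => [/andP[lt_k1 _]|-> /=]; last by rewrite lt_k size_x eqxx.
rewrite lt_k1 size_nseq eqxx /=; apply/negP => /andP[_ /allP/(_ (Some false))].
by rewrite mem_nseq nth_dims //; case: (chain_cc.1 _ lt_k1) => _ -> /(_ isT).
Qed.

Lemma is_wcell_wface z e i : is_wcell (dims cc) z -> is_wcell (dims cc) (wface (dims cc) e i z).
Proof.
case: z => k x /andP[/andP[lt_k /eqP size_x] _].
by apply: is_wcell_wnorm; rewrite ?size_set_star // -size_dims.
Qed.

Lemma chain_map_wnorm k x : k < size cc -> size x = size (stars cc k) ->
  chain_map cc (wnorm (dims cc) (k, x)) = chain_map cc (k, x).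
Proof.
move=> lt_k size_x; rewrite /wnorm /=; case: ifP => // /andP[]; rewrite size_dims => lt_k1 all_x.
have x_true a : a \in stars cc k -> nth None x (index a (stars cc k)) = Some true.
  by move=> a_in; apply/eqP/(allP all_x)/mem_nth; rewrite size_x index_mem.
have nseq_false a : a \in stars cc k.+1 ->
    nth None (nseq (nth 0 (dims cc) k.+1) (Some false)) (index a (stars cc k.+1)) = Some false.
  by move=> a_in; rewrite nth_nseq nth_dims // index_mem a_in.
rewrite [LHS]surjective_pairing [RHS]surjective_pairing; congr pair.
  apply/ffunP => a; rewrite !chain_mapE //.
  case: (ltngtP (hc cc a) k) => [lt_ak|lt_ka|eq_ak]; first by rewrite ltnS ltnW.
    rewrite ltnS leqNgt lt_ka /=; case: eqP => // eq_ak1.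
    by rewrite nseq_false // mem_chain_stars // eq_ak1.
  by rewrite eq_ak ltnS leqnn x_true // mem_chain_stars // eq_ak.
rewrite /chain_map /= (eq_in_filter (a2 := pred0)) ?filter_pred0; last first.
  by move=> a /nseq_false ->.
by rewrite (eq_in_filter (a2 := pred0)) ?filter_pred0 // => a /x_true ->.
Qed.

Lemma chain_map_set_star k x e i : k < size cc -> size x = size (stars cc k) ->
  chain_map cc (k, set_star e i x) = yface e i (chain_map cc (k, x)).
Proof.
move=> lt_k size_x; have uniq_k := chain_cube_uniq chain_cc lt_k.
pose starred a := nth None x (index a (stars cc k)) == None.
have index_starred a : a \in stars cc k -> starred a ->
    index a [seq b <- stars cc k | starred b] = count (pred1 None) (take (index a (stars cc k)) x).
  move=> a_in starred_a; rewrite index_filter //.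
  by rewrite (count_take_nth_index None (pred1 None)) // eq_sym.
have nth_set a : a \in stars cc k -> nth None (set_star e i x) (index a (stars cc k)) =
    if starred a && (count (pred1 None) (take (index a (stars cc k)) x) == i) then Some e
    else nth None x (index a (stars cc k)).
  by move=> a_in; rewrite nth_set_star ?size_x ?index_mem.
rewrite /chain_map /yface /=; congr pair.
  apply/ffunP => a; rewrite !ffunE mem_filter.
  case a_in: (a \in stars cc k); rewrite /= ?andbF // nth_set // andbT -/(starred a).
  by case starred_a: (starred a); rewrite //= index_starred.
rewrite -/starred -filter_predI; apply: eq_in_filter => a a_in /=.
rewrite nth_set // -/(starred a).
case starred_a: (starred a); rewrite /= ?andbF; last by rewrite -/(starred a) starred_a.
by rewrite index_starred // (eqP starred_a); case: (_ == i).
Qed.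

Lemma chain_map_wface z e i : is_wcell (dims cc) z ->
  chain_map cc (wface (dims cc) e i z) = yface e i (chain_map cc z).
Proof.
case: z => k x /is_wcell_chainP[lt_k size_x].
by rewrite /wface /= chain_map_wnorm ?size_set_star // chain_map_set_star.
Qed.

Lemma cdim_chain_map z : is_wcell (dims cc) z -> cdim (chain_map cc z) = wdim z.
Proof.
case: z => k x /is_wcell_chainP[lt_k size_x].
have uniq_k := chain_cube_uniq chain_cc lt_k.
have := count_take_nth_index None (pred1 None) (size x) uniq_k (esym size_x).
by rewrite {1}size_x !take_size /cdim /wdim size_filter.
Qed.

Lemma chain_map_inj w w' : is_wcell (dims cc) w -> is_wcell (dims cc) w' ->
  chain_map cc w = chain_map cc w' -> w = w'.
Proof.
move: w w' => [k x] [k' x'].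
wlog le_kk' : k x k' x' / k <= k'.
  move=> wlog vw vw' E; case: (leqP k k') => [le_kk'|/ltnW le_k'k]; first exact: wlog.
  by rewrite (wlog k' x' k x le_k'k vw' vw (esym E)).
move=> vw vw' E; have [lt_k size_x] := is_wcell_chainP vw.
have [lt_k' size_x'] := is_wcell_chainP vw'.
case: (ltnP k k') => [lt_kk'|]; last first.
  move=> le_k'k; have eq_kk' : k = k' by apply/eqP; rewrite eqn_leq le_kk'.
  subst k'; congr pair.
  by rewrite (wcell_coordsE lt_k size_x) (wcell_coordsE lt_k' size_x') E.
case/andP: vw => _ /negP[]; rewrite size_dims (leq_ltn_trans lt_kk' lt_k').
rewrite (wcell_coordsE lt_k size_x); apply/allP => _ /mapP[a a_in ->].
by move: a_in; rewrite E mem_chain_stars // chain_mapE // => /eqP <-; rewrite lt_kk'.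
Qed.

Definition top_cell k : wcell := (k, nseq (nth 0 (dims cc) k) None).

Lemma is_wcell_top_cell k : k < size cc -> is_wcell (dims cc) (top_cell k).
Proof.
move=> lt_k; rewrite /is_wcell /= size_dims lt_k size_nseq eqxx /=.
apply/negP => /andP[_ /allP/(_ None)].
by rewrite mem_nseq nth_dims //; case: (chain_cc.1 _ lt_k) => _ -> /(_ isT).
Qed.

Lemma chain_map_top_cell k : k < size cc -> chain_map cc (top_cell k) = nth (init_v A) cc k.
Proof.
move=> lt_k; rewrite [RHS]surjective_pairing /chain_map /=; congr pair.
  apply/ffunP => a; rewrite ffunE nth_nseq if_same.
  by case: ifP => // a_in; apply/esym/eqP; rewrite -mem_cube_stars ?chain_cube.
by rewrite (eq_filter (a2 := predT)) ?filter_predT // => a; rewrite nth_nseq if_same.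
Qed.

End ChainMap.

Section MorphismToOrder.
Variables (A : finType) (cc ee : seq (cube A)) (F : wcell -> wcell).
Hypotheses (chain_cc : is_chain cc) (chain_ee : is_chain ee)
  (F_precubical : precubical_map (dims cc) (dims ee) F)
  (F_chain : forall z, is_wcell (dims cc) z -> chain_map ee (F z) = chain_map cc z).

Lemma morphism_top_cell j : j < size cc ->
  (F (top_cell cc j)).1 < size ee /\
  chain_map ee (F (top_cell cc j)) = nth (init_v A) cc j.
Proof.
move=> lt_j; have top_j := is_wcell_top_cell chain_cc lt_j.
have [/andP[/andP[lt_k _] _] _ _] := F_precubical top_j.
by rewrite -size_dims; split; rewrite // F_chain // chain_map_top_cell.
Qed.

Lemma morphism_level_mono a b : hc cc b <= hc cc a ->
  hc ee b <= (F (top_cell cc (hc cc a))).1.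
Proof.
move=> le_ba; have [lt_k F_top] := morphism_top_cell (chain_hc_lt a chain_cc).
case: (F _) lt_k F_top => k w /= lt_k F_top.
apply: (level_le_of_chain_map_neq0 (w := w) chain_ee lt_k).
rewrite F_top chain_coord ?chain_hc_lt //.
by rewrite ltnNge le_ba /=; case: ifP.
Qed.

Lemma morphism_level a : hc ee a = (F (top_cell cc (hc cc a))).1.
Proof.
have [lt_k F_top] := morphism_top_cell (chain_hc_lt a chain_cc).
case: (F _) lt_k F_top => k w /= lt_k F_top.
apply: (level_of_chain_map_star (w := w) chain_ee lt_k).
by rewrite F_top chain_coord ?chain_hc_lt ?ltnn ?eqxx.
Qed.

Lemma morphism_dle : dle (dorder_of ee) (dorder_of cc).
Proof.
split=> a b /=.
  apply: contraTT; rewrite -!leqNgt => le_ba.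
  by rewrite (morphism_level a); apply: morphism_level_mono.
case/andP=> /eqP eq_ab lt_ab; rewrite !morphism_level -eq_ab eqxx /=.
have [lt_k F_top] := morphism_top_cell (chain_hc_lt a chain_cc).
case: (F _) lt_k F_top => k w /= lt_k /(congr1 snd) stars_a.
have in_stars c : hc cc c = hc cc a -> c \in (chain_map ee (k, w)).2.
  by move=> hca; rewrite stars_a mem_chain_stars ?chain_hc_lt ?hca.
rewrite -stars_a in lt_ab.
by apply: (index_filter_lt (chain_cube_uniq chain_ee lt_k)) lt_ab; apply: in_stars.
Qed.

End MorphismToOrder.

Section OrderToMorphism.
Variables (A : finType) (cc ee : seq (cube A)).
Hypotheses (chain_cc : is_chain cc) (chain_ee : is_chain ee)
  (ee_cc : dle (dorder_of ee) (dorder_of cc)).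

Definition image_level j : nat :=
  if stars cc j is a :: _ then hc ee a else 0.

Lemma hc_image_level a : hc ee a = image_level (hc cc a).
Proof.
have lt_a := chain_hc_lt a chain_cc; have [_] := chain_cc.1 _ lt_a.
rewrite /image_level /cdim; case E: (stars cc (hc cc a)) => [|b s] // _.
have : b \in stars cc (hc cc a) by rewrite E mem_head.
rewrite mem_chain_stars // => /eqP hb; case: ee_cc => [ee_cc_x _].
by case: (ltngtP (hc ee a) (hc ee b)) => // /ee_cc_x /=; rewrite hb ltnn.
Qed.

Lemma image_level_lt j : j < size cc -> image_level j < size ee.
Proof.
move=> lt_j; have [a <-] := chain_level_nonempty chain_cc lt_j.
by rewrite -hc_image_level chain_hc_lt.
Qed.

Lemma hc_lt_image_level c j : j < size cc -> hc ee c < image_level j -> hc cc c < j.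
Proof.
move=> lt_j; have [a <-] := chain_level_nonempty chain_cc lt_j.
by rewrite -hc_image_level; apply: ee_cc.1.
Qed.

Lemma image_level_lt_hc c j : j < size cc -> image_level j < hc ee c -> j < hc cc c.
Proof.
move=> lt_j; have [a <-] := chain_level_nonempty chain_cc lt_j.
by rewrite -hc_image_level; apply: ee_cc.1.
Qed.

Definition raw_image_cell (z : wcell) : wcell :=
  (image_level z.1,
   [seq (chain_map cc z).1 b | b <- stars ee (image_level z.1)]).

Definition image_cell (z : wcell) : wcell := wnorm (dims ee) (raw_image_cell z).

Lemma raw_image_cell_coord j x c : j < size cc ->
  (chain_map ee (raw_image_cell (j, x))).1 c = (chain_map cc (j, x)).1 c.
Proof.
move=> lt_j; rewrite /= chain_mapE ?image_level_lt //.
case: (ltngtP (hc ee c) (image_level j)) => [lt_c|gt_c|eq_c].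
- by rewrite chain_mapE // hc_lt_image_level.
- by rewrite chain_mapE // ltnNge ltnW ?gtn_eqF ?image_level_lt_hc.
have c_in : c \in stars ee (image_level j).
  by rewrite mem_chain_stars ?image_level_lt // eq_c.
by rewrite (nth_map c) ?index_mem // nth_index.
Qed.

Lemma sorted_level_stars j : j < size cc ->
  sorted (fun u v => index u (stars ee (image_level j)) < index v (stars ee (image_level j)))
    (stars cc j).
Proof.
move=> lt_j; have [_ ee_cc_y] := ee_cc.
apply: (sub_in_sorted (P := mem (stars cc j)))
  (sorted_index (chain_cube_uniq chain_cc lt_j)); last exact/allP.
move=> u v; rewrite !mem_chain_stars // => /eqP hu /eqP hv lt_uv.
have /ee_cc_y /andP[_] : (dorder_of cc).2 u v by rewrite /= -hu -hv eqxx.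
by rewrite hc_image_level -hu.
Qed.

Lemma chain_map_raw_image_cell z : is_wcell (dims cc) z ->
  chain_map ee (raw_image_cell z) = chain_map cc z.
Proof.
case: z => j x /is_wcell_chainP [lt_j _].
have lt_m := image_level_lt lt_j; set t := stars ee (image_level j).
have coordE : (chain_map ee (raw_image_cell (j, x))).1 = (chain_map cc (j, x)).1.
  by apply/ffunP => c; rewrite raw_image_cell_coord.
rewrite [LHS]surjective_pairing [RHS]surjective_pairing coordE; congr pair.
rewrite !chain_map_stars ?coordE //; set f := (chain_map cc (j, x)).1; rewrite /= -/t.
have lt_tr : transitive (fun u v => index u t < index v t) by move=> ? ? ?; apply: ltn_trans.
apply: (irr_sorted_eq lt_tr (fun u => ltnn _)).
- by apply: (sorted_filter lt_tr); apply: sorted_index; apply: chain_cube_uniq.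
- by apply: (sorted_filter lt_tr); apply: sorted_level_stars.
move=> c; rewrite !mem_filter /f chain_mapE // !mem_chain_stars // hc_image_level.
by case: (ltngtP (hc cc c) j) => // ->; rewrite !eqxx.
Qed.

Lemma is_wcell_image_cell z : is_wcell (dims cc) z -> is_wcell (dims ee) (image_cell z).
Proof.
case: z => j x /is_wcell_chainP [lt_j _].
by apply: is_wcell_wnorm; rewrite ?image_level_lt // size_map nth_dims ?image_level_lt.
Qed.

Lemma chain_map_image_cell z : is_wcell (dims cc) z ->
  chain_map ee (image_cell z) = chain_map cc z.
Proof.
move=> z_cell; rewrite -chain_map_raw_image_cell //; case: z z_cell => j x.
case/is_wcell_chainP => lt_j _.
by rewrite chain_map_wnorm ?image_level_lt // size_map.
Qed.

Lemma dle_chain_le : chain_le cc ee.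
Proof.
exists image_cell; split; last exact: chain_map_image_cell.
move=> z z_cell; have image_z := is_wcell_image_cell z_cell.
have dim_z : wdim (image_cell z) = wdim z.
  by rewrite -(cdim_chain_map chain_ee image_z) chain_map_image_cell // cdim_chain_map.
split=> // e i _; apply: (chain_map_inj chain_ee).
- exact/is_wcell_image_cell/is_wcell_wface.
- exact: is_wcell_wface.
by rewrite chain_map_image_cell ?is_wcell_wface // !chain_map_wface // chain_map_image_cell.
Qed.

End OrderToMorphism.

Lemma dle_deq (A : finType) (d1 d1' d2 d2' : dorder A) :
  deq d1 d1' -> deq d2 d2' -> (dle d1 d2 <-> dle d1' d2').
Proof.
case=> [e1x e1y] [e2x e2y]; split=> -[le_x le_y]; split=> a b.
- by rewrite -e1x -e2x; apply: le_x.
- by rewrite -e1y -e2y; apply: le_y.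
- by rewrite e1x e2x; apply: le_x.
- by rewrite e1y e2y; apply: le_y.
Qed.

Lemma chain_leP (A : finType) (cc ee : seq (cube A)) : is_chain cc -> is_chain ee ->
  chain_le cc ee <-> dle (dorder_of ee) (dorder_of cc).
Proof.
move=> chain_cc chain_ee; split; last exact: dle_chain_le.
by case=> F [F_precubical F_chain]; apply: (morphism_dle chain_cc chain_ee F_precubical).
Qed.

Theorem proposition4p9 (A : finType) :
  (* the maps are well defined *)
  (forall cc : seq (cube A), is_chain cc -> regular (dorder_of cc))
  /\ (forall d : dorder A, regular d -> is_chain (cstar d))
  (* mutually inverse *)
  /\ (forall cc : seq (cube A), is_chain cc -> cstar (dorder_of cc) = cc)
  /\ (forall d : dorder A, regular d -> deq (dorder_of (cstar d)) d)
  (* order isomorphisms: Ch(Y^A) ≅ (R(A), ⊒) *)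
  /\ (forall cc ee : seq (cube A), is_chain cc -> is_chain ee ->
        (chain_le cc ee <-> dle (dorder_of ee) (dorder_of cc)))
  /\ (forall d d' : dorder A, regular d -> regular d' ->
        (dle d' d <-> chain_le (cstar d) (cstar d')))
  (* Σ_A-equivariance *)
  /\ (forall (s : {perm A}) (cc : seq (cube A)), is_chain cc ->
        deq (dorder_of (act_chain cc s)) (act_dorder (dorder_of cc) s))
  /\ (forall (s : {perm A}) (d : dorder A), regular d ->
        cstar (act_dorder d s) = act_chain (cstar d) s).
Proof.
split; first exact: regular_dorder_of.
split; first exact: regular_cstar_chain.
split; first exact: dorder_ofK.
split; first exact: cstarK.
split; first exact: chain_leP.
split.
  move=> d d' reg reg'; rewrite (chain_leP (regular_cstar_chain reg) (regular_cstar_chain reg')).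
  by symmetry; apply: dle_deq (cstarK reg') (cstarK reg).
split; first by move=> s cc _; apply: dorder_of_act.
exact: cstar_act.
Qed.
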